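(* In the setting below, for any integer $k$ with $-g(K)\le k\le g(K)$ and any nonzero $a\in B'_k$, there is no element $b\in\widehat{CFD}(X_K^{[n]})$ with $D_1\circ D_2(b)=D_{123}(a)$ or with $D_1\circ D_{12}(b)=D_{123}(a)$.
   Context: Over $\mathbb F=\mathbb Z/2$. Let $K$ be a nontrivial knot of genus $g(K)$ in an $L$-space integral homology sphere, $C^-=CFK^-(K)$, a free $\mathbb F[U]$-complex with Alexander filtration $\cdots\subset\mathcal F_i\subset\mathcal F_{i+1}\subset\cdots$, $A(x)=\min\{i: x\in\mathcal F_i\}$, $U$ lowering $A$ by one, assumed reduced. A filtered basis is an $\mathbb F[U]$-basis whose images in the associated graded module form a basis. A vertically simplified basis is a filtered basis $\{\tilde\xi_0,\dots,\tilde\xi_{2m}\}$ with $A(\tilde\xi_{2j-1})-A(\tilde\xi_{2j})=h_j>0$, $\partial\tilde\xi_{2j-1}\equiv\tilde\xi_{2j}\pmod{UC^-}$ ($1\le j\le m$) and $\partial\tilde\xi_{2i}\equiv0\pmod{UC^-}$. A horizontally simplified basis is a filtered basis $\{\tilde\eta_0,\dots,\tilde\eta_{2m}\}$ with $A(\tilde\eta_{2j})-A(\tilde\eta_{2j-1})=\ell_j>0$, $\partial\tilde\eta_{2j-1}\equiv U^{\ell_j}\tilde\eta_{2j}\pmod{\mathcal F_{A(\tilde\eta_{2j-1})-1}}$, and $A(\partial\tilde\eta_{2i})<A(\tilde\eta_{2i})$. Fix such bases with the property that each $\tilde\xi_p$ is an $\mathbb F[U]$-combination of those $\tilde\eta_q$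 with $A(a_{p,q}\tilde\eta_q)=A(\tilde\xi_p)$, and vice versa. Let $N=\widehat{CFD}(X_K^{[n]})$ (any integer framing $n$), given by the following model: $\iota_0N$ has bases $\{\xi_p\}$ and $\{\eta_p\}$ related by the change-of-basis coefficients of $\{\tilde\xi_p\},\{\tilde\eta_p\}$ evaluated at $U=0$; each element of $\iota_0N$ inherits the Alexander grading of the corresponding element of $C^-$; $\iota_1N$ has basis $\{\kappa^j_1,\dots,\kappa^j_{h_j}\}_j\cup\{\lambda^j_1,\dots,\lambda^j_{\ell_j}\}_j$ together with generators of an ''unstable chain''. Coefficient maps: vertical chains $\xi_{2j-1}\xrightarrow{D_1}\kappa^j_1\xleftarrow{D_{23}}\kappa^j_2\xleftarrow{D_{23}}\cdots\xleftarrow{D_{23}}\kappa^j_{h_j}\xleftarrow{D_{123}}\xi_{2j}$; horizontal chains $\eta_{2j-1}\xrightarrow{D_3}\lambda^j_1\xrightarrow{D_{23}}\cdots\xrightarrow{D_{23}}\lambda^j_{\ell_j}\xrightarrow{D_2}\eta_{2j}$; and an unstable chain connecting $\xi_0$ to $\eta_0$ depending on $t=n-2\tau(K)$ (where $\tau(K)=A(\tilde\xi_0)$): for $t>0$, $\xi_0\xrightarrow{D_1}\mu_1\xleftarrow{D_{23}}\cdots\xleftarrow{D_{23}}\mu_t\xleftarrow{D_3}\eta_0$; for $t=0$, $\xi_0\xrightarrow{D_1}\nu_1\xleftarrow{D_\emptyset}\nu_2\xrightarrow{D_2}\eta_0$ (for an $L$-space knot, instead $\xi_0\xrightarrow{D_{12}}\eta_0$);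 for $t<0$, $\xi_0\xrightarrow{D_{12}}\nu_1\xleftarrow{D_\emptyset}\nu_2\xrightarrow{D_3}\mu_1\xrightarrow{D_{23}}\cdots\xrightarrow{D_{23}}\mu_{|t|}\xrightarrow{D_2}\eta_0$ (for an $L$-space knot, instead $\xi_0\xrightarrow{D_{123}}\mu_1\xrightarrow{D_{23}}\cdots\xrightarrow{D_{23}}\mu_{|t|}\xrightarrow{D_2}\eta_0$). Here an arrow $x\xrightarrow{D_I}y$ means $y$ appears in $D_I(x)$, the $D_I$ being extended linearly. $B_k\subset\iota_0N$ is the span of elements of Alexander grading $k$, and $B'_k=B_k\cap\operatorname{span}\{\xi_2,\xi_4,\dots,\xi_{2m}\}\cap\operatorname{span}\{\eta_1,\eta_3,\dots,\eta_{2m-1}\}$. *)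

From HB Require Import structures.
From mathcomp Require Import all_boot all_order all_algebra.
Import Order.TTheory GRing.Theory Num.Theory.
Local Open Scope ring_scope.

(* The knot Floer complex C^- = CFK^-(K).                               *)
(* C^- is a free F[U]-module (F = Z/2) of rank r.  We use coordinates   *)
(* with respect to the vertically simplified filtered basis ~xi_p, so   *)
(* an element of C^- is a row vector over {poly 'F_2} (U = 'X), ~xi_p   *)
(* is [delta_mx 0 p], and the differential is x |-> x *m Dm.  Since     *)
(* ~xi is a filtered basis with gradings Axi, the Alexander filtration  *)
(* is F_k = span{ U^s ~xi_p : Axi p - s <= k }.                          *)

Definition inF r (Axi : 'I_r -> int) (k : int) (x : 'rV[{poly 'F_2}]_r) : Prop :=
  forall (p : 'I_r) (s : nat), (x 0 p)`_s != 0 -> Axi p - s%:Z <= k.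

Definition hasA r (Axi : 'I_r -> int) (x : 'rV[{poly 'F_2}]_r) (a : int) : Prop :=
  inF r Axi a x /\ ~ inF r Axi (a - 1) x.

(* x \in U C^- *)
Definition inUC r (x : 'rV[{poly 'F_2}]_r) : Prop :=
  forall p : 'I_r, (x 0 p)`_0 = 0.

Definition filtered_basis r (Axi : 'I_r -> int) (B : 'M[{poly 'F_2}]_r)
    (Ab : 'I_r -> int) : Prop :=
  B \in unitmx /\
  forall (c : 'rV[{poly 'F_2}]_r) (k : int),
    inF r Axi k (c *m B) <->
    (forall (q : 'I_r) (s : nat), (c 0 q)`_s != 0 -> Ab q - s%:Z <= k).

(* Standing algebraic properties of CFK^- of a knot in an L-space      *)
(* integral homology sphere: F[U]-linear differential squaring to 0,   *)
(* preserving the filtration, reduced, with homology F[U].             *)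
Definition knot_complex r (Axi : 'I_r -> int) (Dm : 'M[{poly 'F_2}]_r) : Prop :=
  [/\ Dm *m Dm = 0,
      (forall x k, inF r Axi k x -> inF r Axi k (x *m Dm)),
      (forall x k, inF r Axi k x ->
         exists y z, x *m Dm = y + 'X *: z /\ inF r Axi (k - 1) y) &
      (exists z : 'rV[{poly 'F_2}]_r,
         z *m Dm = 0 /\
         (forall c, c *m Dm = 0 -> exists f w, c = f *: z + w *m Dm) /\
         (forall f w, f *: z = w *m Dm -> f = 0))].

(* genus via genus detection: g = max Alexander grading of HFK-hat,    *)
(* which for a reduced complex is the max grading of a filtered basis. *)
Definition genus_of r (Axi : 'I_r -> int) (g : nat) : Prop :=
  (forall p, Axi p <= g%:Z) /\ (exists p, Axi p = g%:Z).

(* indices: evI m i = 2i, oddI m j = 2j+1 (so xi_{2j-1}, j=1..m, is     *)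
(* oddI m (j-1) and xi_{2j} is evI m j) *)
Definition evI m (i : nat) : 'I_(m.*2.+1) := inord (i.*2).
Definition oddI m (j : nat) : 'I_(m.*2.+1) := inord (j.*2.+1).

Definition vert_simpl m (Dm : 'M[{poly 'F_2}]_(m.*2.+1)) (Axi : 'I_(m.*2.+1) -> int)
    (h : 'I_m -> nat) : Prop :=
  (forall j : 'I_m,
     [/\ (0 < h j)%N,
         Axi (oddI m j) - Axi (evI m j.+1) = (h j)%:Z &
         inUC _ (delta_mx 0 (oddI m j) *m Dm - delta_mx 0 (evI m j.+1))]) /\
  (forall i : 'I_m.+1, inUC _ (delta_mx 0 (evI m i) *m Dm)).

(* rows of Q are the horizontally simplified basis ~eta_q *)
Definition horiz_simpl m (Dm : 'M[{poly 'F_2}]_(m.*2.+1)) (Axi : 'I_(m.*2.+1) -> int)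
    (Q : 'M[{poly 'F_2}]_(m.*2.+1)) (Aeta : 'I_(m.*2.+1) -> int)
    (l : 'I_m -> nat) : Prop :=
  [/\ filtered_basis _ Axi Q Aeta,
      (forall j : 'I_m,
         [/\ (0 < l j)%N,
             Aeta (evI m j.+1) - Aeta (oddI m j) = (l j)%:Z &
             inF _ Axi (Aeta (oddI m j) - 1)
               (row (oddI m j) Q *m Dm - 'X^(l j) *: row (evI m j.+1) Q)]) &
      (forall i : 'I_m.+1,
         inF _ Axi (Aeta (evI m i) - 1) (row (evI m i) Q *m Dm))].

(* ~xi_p = sum_q P p q ~eta_q  and  ~eta_q = sum_p Q q p ~xi_p, with the *)
Definition compat r (Axi Aeta : 'I_r -> int) (P Q : 'M[{poly 'F_2}]_r) : Prop :=
  [/\ P *m Q = 1,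
      (forall p q, P p q != 0 -> hasA r Axi (P p q *: row q Q) (Axi p)) &
      (forall q p, Q q p != 0 -> hasA r Axi (Q q p *: delta_mx 0 p) (Aeta q))].

Definition eval0 r (M : 'M[{poly 'F_2}]_r) : 'M['F_2]_r :=
  map_mx (fun c : {poly 'F_2} => c.[0]) M.

(* The type D structure N = CFD-hat(X_K^[n]).                           *)

Definition nnu (t : int) (lsp : bool) : nat := if lsp || (0 < t) then 0%N else 2%N.

(* generators: xi_p (basis of iota_0 N), kappa^j_i, lambda^j_i, mu_i, nu_i *)
Definition Gen m (h l : 'I_m -> nat) (t : int) (lsp : bool) : finType :=
  ('I_(m.*2.+1) + {j : 'I_m & 'I_(h j)} + {j : 'I_m & 'I_(l j)}
     + 'I_(`|t|%N) + 'I_(nnu t lsp))%type.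

Inductive GenView m :=
  | GX of 'I_(m.*2.+1)
  | GK of 'I_m & nat     (* kappa^{j+1}_{i+1} *)
  | GL of 'I_m & nat     (* lambda^{j+1}_{i+1} *)
  | GM of nat            (* mu_{i+1} *)
  | GN of nat.           (* nu_{i+1} *)

Definition view (m : nat) (h l : 'I_m -> nat) (t : int) (lsp : bool)
    (x : Gen m h l t lsp) : GenView m :=
  match x with
  | inl (inl (inl (inl p))) => GX m p
  | inl (inl (inl (inr (existT j i)))) => GK m j i
  | inl (inl (inr (existT j i))) => GL m j i
  | inl (inr i) => GM m i
  | inr i => GN m i
  end.

Inductive Dlabel := D1 | D2 | D3 | D12 | D23 | D123 | Dnil.

(* coefficient of y in D_I(x); P0, Q0 : change of basis at U = 0,      *)
(* xi_p = sum_q P0 p q eta_q,  eta_q = sum_p Q0 q p xi_p.               *)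
Definition arrow m (h l : 'I_m -> nat) (P0 Q0 : 'M['F_2]_(m.*2.+1)) (t : int)
    (lsp : bool) (I : Dlabel) (x y : Gen m h l t lsp) : 'F_2 :=
  let b2 (c : bool) : 'F_2 := (c : nat)%:R in
  match I, view m h l t lsp x, view m h l t lsp y with
  | D1, GX p, GK j i => b2 ((p == j.*2.+1 :> nat) && (i == 0)%N)
  | D1, GX p, GM i => b2 [&& 0 < t, p == 0%N :> nat & i == 0%N]
  | D1, GX p, GN i => b2 [&& t == 0, ~~ lsp, p == 0%N :> nat & i == 0%N]
  | D2, GL j i, GX p => b2 (i == (l j).-1) * Q0 (evI m j.+1) p
  | D2, GN i, GX p => b2 [&& t == 0, ~~ lsp & i == 1%N] * Q0 (evI m 0) p
  | D2, GM i, GX p => b2 ((t < 0) && (i == `|t|.-1)) * Q0 (evI m 0) p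
  | D3, GX p, GL j i => P0 p (oddI m j) * b2 (i == 0)%N
  | D3, GX p, GM i => b2 ((0 < t) && (i == `|t|.-1)) * P0 p (evI m 0)
  | D3, GN i, GM i' => b2 [&& t < 0, ~~ lsp, i == 1%N & i' == 0%N]
  | D12, GX p, GX p' => b2 [&& t == 0, lsp & p == 0%N :> nat] * Q0 (evI m 0) p'
  | D12, GX p, GN i => b2 [&& t < 0, ~~ lsp, p == 0%N :> nat & i == 0%N]
  | D23, GK j i, GK j' i' => b2 ((j == j') && (i == i'.+1))
  | D23, GL j i, GL j' i' => b2 ((j == j') && (i' == i.+1))
  | D23, GM i, GM i' => b2 (((0 < t) && (i == i'.+1)) || ((t < 0) && (i' == i.+1)))
  | D123, GX p, GK j i => b2 ((p == j.*2.+2 :> nat) && (i == (h j).-1))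
  | D123, GX p, GM i => b2 [&& t < 0, lsp, p == 0%N :> nat & i == 0%N]
  | Dnil, GN i, GN i' => b2 ((i == 1%N) && (i' == 0%N))
  | _, _, _ => 0
  end.

Definition DI m h l P0 Q0 t lsp (I : Dlabel)
    (v : {ffun Gen m h l t lsp -> 'F_2}) : {ffun Gen m h l t lsp -> 'F_2} :=
  [ffun y => \sum_x v x * arrow m h l P0 Q0 t lsp I x y].

(* an element of iota_0 N given by its xi-coordinates *)
Definition inj0 m h l t lsp (a : 'rV['F_2]_(m.*2.+1)) : {ffun Gen m h l t lsp -> 'F_2} :=
  [ffun y => match view m h l t lsp y with GX p => a 0 p | _ => 0 end].

(* a \in B'_k: homogeneous of grading k, in span{xi_2,...,xi_2m} and   *)
(* in span{eta_1,eta_3,...,eta_{2m-1}}. *)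
Definition inBp m (Axi : 'I_(m.*2.+1) -> int) (P0 : 'M['F_2]_(m.*2.+1)) (k : int)
    (a : 'rV['F_2]_(m.*2.+1)) : Prop :=
  [/\ (forall p, a 0 p != 0 -> Axi p = k),
      (forall p : 'I_(m.*2.+1), a 0 p != 0 -> ~~ odd p && (p != 0%N :> nat)) &
      (forall q : 'I_(m.*2.+1), (a *m P0) 0 q != 0 -> odd q)].

(* If D1 (D2 b) = D123 a (or D1 (D12 b) = D123 a), the kappa chains force
   h_j = 1 wherever a_{2j} <> 0 and identify the xi_{2j-1}-coordinates of the
   iota_0-part of D2 b (resp. D12 b) with those of a.  That part lies in
   span{eta_0, eta_2, ..., eta_2m}; lifting its Alexander-grading k + 1 part to
   C^- gives x in span{~eta_0, ~eta_2, ...} with D x = a mod U.  Since a is in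
   span{eta_1, eta_3, ...}, some ~eta_{2j-1} of grading k has nonzero coefficient
   c in D x, and the horizontal arrow ~eta_{2j-1} -> U^(l_j) ~eta_{2j} makes the
   U^(l_j)-coefficient of D D x at ~eta_{2j} equal to c, contradicting D D = 0. *)

From HB Require Import structures.
From mathcomp Require Import all_boot all_order all_algebra zify.
Import Order.TTheory GRing.Theory Num.Theory.
Local Open Scope ring_scope.

Set Implicit Arguments.
Unset Strict Implicit.
Unset Printing Implicit Defensive.

Lemma evI_val m (i : nat) : (i <= m)%N -> evI m i = i.*2 :> nat.
Proof. by move=> le_im; rewrite /evI inordK //; lia. Qed.

Lemma oddI_val m (j : nat) : (j < m)%N -> oddI m j = j.*2.+1 :> nat.
Proof. by move=> lt_jm; rewrite /oddI inordK //; lia. Qed.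

Lemma evI_even m (i : nat) : ~~ odd (evI m i).
Proof. by rewrite /evI /inord /insubd; case: insubP => [u _ ->|_] /=; rewrite ?odd_double. Qed.

Lemma oddI_odd m (j : 'I_m) : odd (oddI m j).
Proof. by rewrite oddI_val //= odd_double. Qed.

Lemma evIS_inj m : injective (fun j : 'I_m => evI m j.+1).
Proof.
move=> j j' /(congr1 val); rewrite /= !evI_val // => -[/(congr1 half)].
by rewrite !doubleK => /val_inj.
Qed.

Lemma ord_double_cases m (p : 'I_(m.*2.+1)) :
  (exists j : 'I_m, p = oddI m j) \/ (exists i : 'I_m.+1, p = evI m i).
Proof.
have lt_p := ltn_ord p; have def_p := odd_double_half p.
case: (boolP (odd p)) => [odd_p|even_p]; [left|right].
- have lt_jm : (p./2 < m)%N by move: def_p; rewrite odd_p /=; lia.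
  by exists (Ordinal lt_jm); apply: val_inj; rewrite /= oddI_val //; move: def_p; rewrite odd_p.
- have lt_im : (p./2 < m.+1)%N by lia.
  exists (Ordinal lt_im); apply: val_inj; rewrite /= evI_val //=.
  by move: def_p; rewrite (negbTE even_p).
Qed.

Notation ev0 := (map_mx (horner_eval (0 : 'F_2))).

Lemma ev0_polyC p q (x : 'M['F_2]_(p, q)) : ev0 (map_mx polyC x) = x.
Proof. by apply/matrixP => i j; rewrite !mxE horner_evalE hornerC. Qed.

Lemma filtered_basis1 r (Axi : 'I_r -> int) : filtered_basis r Axi 1%:M Axi.
Proof. by split=> [|c k]; rewrite ?unitmx1 ?mulmx1. Qed.

Lemma filtered_basis_grading r (Axi : 'I_r -> int) B Ab (f : {poly 'F_2}) q k :
  filtered_basis r Axi B Ab -> f.[0] != 0 -> hasA r Axi (f *: row q B) k -> Ab q = k.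
Proof.
move=> [_ inFB] f0_neq0 [inF_k notinF_k1].
have coefE q' s : ((f *: delta_mx 0 q : 'rV_r) 0 q')`_s = if q' == q then f`_s else 0.
  by rewrite !mxE eqxx /=; case: eqP; rewrite ?mulr1 ?mulr0 ?coef0.
move: inF_k notinF_k1; rewrite rowE scalemxAl !inFB => inF_k notinF_k1.
have le_qk : Ab q <= k.
  by have := inF_k q 0%N; rewrite coefE eqxx -horner_coef0 subr0; apply.
apply/eqP; rewrite eq_le le_qk leNgt; apply/negP => lt_qk; apply: notinF_k1 => q' s.
by rewrite coefE; case: (eqVneq q' q) => [-> _|_]; [lia | rewrite eqxx].
Qed.

Lemma compat_Q0_grading r (Axi Aeta : 'I_r -> int) P Q q p :
  compat r Axi Aeta P Q -> (Q q p).[0] != 0 -> Aeta q = Axi p.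
Proof.
move=> [_ _ gradQ] Qqp0.
have Qqp : Q q p != 0 by apply: contraNneq Qqp0 => ->; rewrite horner0.
symmetry; apply: (filtered_basis_grading (filtered_basis1 Axi) Qqp0).
by rewrite row1; apply: gradQ.
Qed.

Lemma compat_P0_grading r (Axi Aeta : 'I_r -> int) P Q p q :
  filtered_basis r Axi Q Aeta -> compat r Axi Aeta P Q -> (P p q).[0] != 0 -> Axi p = Aeta q.
Proof.
move=> basisQ [_ gradP _] Ppq0.
have Ppq : P p q != 0 by apply: contraNneq Ppq0 => ->; rewrite horner0.
by symmetry; apply: (filtered_basis_grading basisQ Ppq0); apply: gradP.
Qed.

Section KnotComplex.
Variables (m : nat) (Dm : 'M[{poly 'F_2}]_(m.*2.+1)) (Axi Aeta : 'I_(m.*2.+1) -> int)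
  (P Q : 'M[{poly 'F_2}]_(m.*2.+1)) (h l : 'I_m -> nat).
Hypothesis vsimpl : vert_simpl m Dm Axi h.
Hypothesis hsimpl : horiz_simpl m Dm Axi Q Aeta l.
Hypothesis compatPQ : compat (m.*2.+1) Axi Aeta P Q.
Hypothesis Dm2 : Dm *m Dm = 0.

Lemma ev0_Dm r p : ev0 Dm r p = (odd r && (p == r.+1 :> nat))%:R.
Proof.
rewrite mxE horner_evalE horner_coef0.
case: (ord_double_cases r) => -[j ->]; last first.
  by have := vsimpl.2 j p; rewrite -rowE mxE (negbTE (evI_even _ _)) => ->.
have [_ _] := vsimpl.1 j; move/(_ p); rewrite -rowE !mxE coefB eqxx /= => /eqP.
rewrite subr_eq0 oddI_odd => /eqP->; rewrite oddI_val //=.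
have -> : (p == evI m j.+1) = (p == j.*2.+2 :> nat) by rewrite -(inj_eq val_inj) /= evI_val.
by case: eqP; rewrite ?coef1 ?coef0.
Qed.

Lemma row_mul_ev0_Dm (y a : 'rV['F_2]_(m.*2.+1)) :
  (forall p, a 0 p != 0 -> ~~ odd p && (p != 0%N :> nat)) ->
  (forall j : 'I_m, y 0 (oddI m j) = a 0 (evI m j.+1)) ->
  y *m ev0 Dm = a.
Proof.
move=> a_supp ya; apply/rowP => p; rewrite mxE; under eq_bigr do rewrite ev0_Dm.
have a_zero : (~~ odd p && (p != 0%N :> nat)) = false -> a 0 p = 0.
  by move=> notsupp; apply/eqP; apply: contraFT notsupp => /a_supp.
case: (ord_double_cases p) => -[j def_p]; rewrite def_p in a_zero *.
  rewrite a_zero ?oddI_odd // big1 // => r _.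
  suff /negbTE-> : ~~ (odd r && (oddI m j == r.+1 :> nat)) by rewrite mulr0.
  by apply/andP=> -[odd_r /eqP eq_jr]; have := oddI_odd j; rewrite eq_jr /= odd_r.
have le_jm : (j <= m)%N := ltn_ord j.
rewrite evI_val // in a_zero *.
case: (posnP j) => [j0|j_gt0].
  by rewrite a_zero ?j0 ?andbF // big1 // => r _; rewrite andbF mulr0.
have lt_j1 : (j.-1 < m)%N by lia.
have def_j : evI m j = evI m (Ordinal lt_j1).+1 by rewrite /= prednK.
rewrite def_j -ya (bigD1 (oddI m (Ordinal lt_j1))) //= oddI_val //= odd_double.
rewrite -doubleS prednK // eqxx mulr1 big1 ?addr0 // => r neq_r.
suff /negbTE-> : (j.*2 != r.+1) by rewrite andbF mulr0.
apply: contra neq_r => /eqP eq_r; apply/eqP/val_inj; rewrite /= oddI_val //=.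
by move: eq_r; rewrite -(prednK j_gt0) doubleS => -[].
Qed.

Lemma mulPQ : P *m Q = 1%:M. Proof. by case: compatPQ. Qed.

(* The differential in the coordinates of the basis ~eta. *)
Local Notation Deta := (Q *m Dm *m P).

Lemma Deta_even_bound (i : 'I_m.+1) q s :
  (Deta (evI m i) q)`_s != 0 -> Aeta q - s%:Z <= Aeta (evI m i) - 1.
Proof.
have [[_ inFQ] _ D_even] := hsimpl; move: (D_even i).
have -> : row (evI m i) Q *m Dm = row (evI m i) Deta *m Q.
  by rewrite -!row_mul -!mulmxA mulPQ mulmx1.
by rewrite inFQ => /(_ q s); rewrite mxE.
Qed.

Lemma Deta_odd_bound (j : 'I_m) q s :
  (Deta (oddI m j) q - (q == evI m j.+1)%:R * 'X^(l j))`_s != 0 ->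
  Aeta q - s%:Z <= Aeta (oddI m j) - 1.
Proof.
have [[_ inFQ] D_odd _] := hsimpl; have [_ _] := D_odd j.
have -> : row (oddI m j) Q *m Dm - 'X^(l j) *: row (evI m j.+1) Q
        = (row (oddI m j) Deta - 'X^(l j) *: delta_mx 0 (evI m j.+1)) *m Q.
  by rewrite mulmxBl -scalemxAl -rowE -!row_mul -!mulmxA mulPQ mulmx1.
by rewrite inFQ => /(_ q s); rewrite !mxE eqxx /= mulrC.
Qed.

Lemma coef_Deta_even_high (i : 'I_m.+1) q s :
  Aeta (evI m i) <= Aeta q - s%:Z -> (Deta (evI m i) q)`_s = 0.
Proof.
by move=> high; apply/eqP; apply: contraTT high => /Deta_even_bound; rewrite -ltNge; lia.
Qed.

Lemma coef_Deta_odd_high (j : 'I_m) q s : Aeta (oddI m j) <= Aeta q - s%:Z ->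
  (Deta (oddI m j) q)`_s = ((q == evI m j.+1) && (s == l j))%:R.
Proof.
move=> high; have : (Deta (oddI m j) q - (q == evI m j.+1)%:R * 'X^(l j))`_s == 0.
  by apply: contraTT high => /Deta_odd_bound; rewrite -ltNge; lia.
rewrite coefB subr_eq0 => /eqP->; rewrite mulr_natl coefMn coefXn.
by case: (q == _); case: (s == _).
Qed.

Lemma Deta_image_bound (k : int) (x : 'rV['F_2]_(m.*2.+1)) :
  (forall q, x 0 q != 0 -> ~~ odd q /\ Aeta q = k + 1) ->
  forall q s, ((map_mx polyC x *m Deta) 0 q)`_s != 0 -> Aeta q - s%:Z <= k.
Proof.
move=> x_supp q s; apply: contraR; rewrite -ltNge => lt_kq.
rewrite mxE coef_sum; apply/eqP/big1 => q' _; rewrite mxE coefCM.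
have [->|nz] := eqVneq (x 0 q') 0; first by rewrite mul0r.
have [even_q' Aq'] := x_supp q' nz.
case: (ord_double_cases q') => -[i def_q']; first by rewrite def_q' oddI_odd in even_q'.
by rewrite def_q' coef_Deta_even_high ?mulr0 // -def_q' Aq'; lia.
Qed.

(* Only the horizontal arrow ~eta_{2j+1} -> U^(l j) ~eta_{2j+2} reaches this
   coefficient: any other contribution would raise the filtration level. *)
Lemma coef_Deta_image (k : int) (Y : 'rV[{poly 'F_2}]_(m.*2.+1)) (j : 'I_m) :
  (forall q s, (Y 0 q)`_s != 0 -> Aeta q - s%:Z <= k) -> Aeta (oddI m j) = k ->
  ((Y *m Deta) 0 (evI m j.+1))`_(l j) = (Y 0 (oddI m j))`_0.
Proof.
move=> Ybound Aj; have Aq1 : Aeta (evI m j.+1) = k + (l j)%:Z.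
  by have [_ D_odd _] := hsimpl; have [_ + _] := D_odd j; lia.
rewrite mxE coef_sum (bigD1 (oddI m j)) //= big1 ?addr0 => [|q neq_q].
  rewrite coefM big_ord_recl subn0 coef_Deta_odd_high ?Aj ?Aq1; last by lia.
  rewrite !eqxx mulr1 big1 ?addr0 // => s _.
  rewrite coef_Deta_odd_high ?Aj ?Aq1; last by lia.
  by rewrite eqxx lift0 /=; case: eqP => [|_]; [have := ltn_ord s; lia | rewrite mulr0].
rewrite coefM big1 // => s _.
have [->|nz] := eqVneq (Y 0 q)`_s 0; first by rewrite mul0r.
have high : Aeta q <= Aeta (evI m j.+1) - (l j - s)%:Z.
  by have := Ybound q s nz; rewrite Aq1; have := ltn_ord s; lia.
case: (ord_double_cases q) => -[j' def_q]; rewrite def_q in neq_q high *.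
  rewrite coef_Deta_odd_high //.
  suff /negbTE-> : evI m j.+1 != evI m j'.+1 by rewrite mulr0.
  by apply: contra neq_q => /eqP/evIS_inj->.
by rewrite coef_Deta_even_high // mulr0.
Qed.

Lemma ev0_mulPQ : ev0 P *m ev0 Q = 1%:M.
Proof. by rewrite -map_mxM mulPQ map_mx1. Qed.

(* ev0 Q preserves the Alexander grading, so it commutes with truncation. *)
Lemma grading_part_mul_ev0Q (k : int) (x : 'rV['F_2]_(m.*2.+1)) p :
  ((\row_q (if Aeta q == k then x 0 q else 0)) *m ev0 Q) 0 p
  = if Axi p == k then (x *m ev0 Q) 0 p else 0.
Proof.
rewrite !mxE; transitivity (\sum_q if Axi p == k then x 0 q * (Q q p).[0] else 0).
  apply: eq_bigr => q _; rewrite !mxE horner_evalE.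
  have [->|Qqp0] := eqVneq (Q q p).[0] 0; first by rewrite !mulr0 if_same.
  by rewrite (compat_Q0_grading compatPQ Qqp0); case: ifP; rewrite ?mul0r.
case: ifP => _; last by rewrite big1.
by apply: eq_bigr => q _; rewrite mxE horner_evalE.
Qed.

Lemma inBp_eta_grading (k : int) a q :
  inBp m Axi (ev0 P) k a -> (a *m ev0 P) 0 q != 0 -> Aeta q = k.
Proof.
move=> [a_grad _ _] nz; have [basisQ _ _] := hsimpl.
apply/eqP; apply: contraNT nz => neq_qk; rewrite mxE; apply/eqP/big1 => p _.
rewrite mxE horner_evalE; have [->|ap] := eqVneq (a 0 p) 0; first by rewrite mul0r.
have [->|Ppq] := eqVneq (P p q).[0] 0; first by rewrite mulr0.
by move: neq_qk; rewrite -(a_grad p ap) (compat_P0_grading basisQ compatPQ Ppq) eqxx.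
Qed.

Lemma no_even_eta_lift (k : int) (a x : 'rV['F_2]_(m.*2.+1)) :
  inBp m Axi (ev0 P) k a -> a != 0 ->
  (forall q, x 0 q != 0 -> ~~ odd q /\ Aeta q = k + 1) ->
  ev0 (map_mx polyC x *m Q *m Dm) = a -> False.
Proof.
move=> aB a_neq0 x_supp lift; have [_ _ aP_odd] := aB.
have YD0 : map_mx polyC x *m Deta *m Deta = 0.
  have -> : map_mx polyC x *m Deta *m Deta
          = map_mx polyC x *m Q *m (Dm *m (P *m Q) *m Dm) *m P by rewrite !mulmxA.
  by rewrite mulPQ mulmx1 Dm2 mulmx0 mul0mx.
have ev0Y : ev0 (map_mx polyC x *m Deta) = a *m ev0 P by rewrite !mulmxA map_mxM lift.
have [q nz] : exists q, (a *m ev0 P) 0 q != 0.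
  apply/existsP; apply: contraNT a_neq0 => /existsPn aP0.
  rewrite -[a]mulmx1 -ev0_mulPQ mulmxA (_ : a *m ev0 P = 0) ?mul0mx //.
  by apply/rowP => q; rewrite [RHS]mxE; apply/eqP/negPn/aP0.
case: (ord_double_cases q) => -[j def_q]; last first.
  by move: (aP_odd q nz); rewrite def_q (negbTE (evI_even _ _)).
have Aj : Aeta (oddI m j) = k by rewrite -def_q; apply: inBp_eta_grading aB nz.
move: nz; rewrite -ev0Y mxE horner_evalE horner_coef0 def_q.
by rewrite -(coef_Deta_image (Deta_image_bound x_supp) Aj) YD0 mxE coef0 eqxx.
Qed.

Lemma kappa_chain_absurd (k : int) (a x : 'rV['F_2]_(m.*2.+1)) :
  inBp m Axi (ev0 P) k a -> a != 0 ->
  (forall q, x 0 q != 0 -> ~~ odd q) ->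
  (forall j : 'I_m, (x *m ev0 Q) 0 (oddI m j) = a 0 (evI m j.+1)
                    /\ (a 0 (evI m j.+1) != 0 -> h j = 1%N)) ->
  False.
Proof.
move=> aB a_neq0 x_even kappa; have [a_grad a_supp _] := aB.
pose x' := \row_q (if Aeta q == k + 1 then x 0 q else 0).
apply: (no_even_eta_lift (x := x') aB a_neq0).
  move=> q; rewrite mxE; case: (eqVneq (Aeta q) (k + 1)) => [Aq|_]; last by rewrite eqxx.
  by move=> nz; split=> //; exact: x_even.
rewrite !map_mxM ev0_polyC; apply: row_mul_ev0_Dm a_supp _ => j.
rewrite grading_part_mul_ev0Q; have [xQa a_h1] := kappa j.
case: eqP => [_ //|Aj]; have [->//|nz] := eqVneq (a 0 (evI m j.+1)) 0.
have [_ hdiff _] := vsimpl.1 j; move: hdiff; rewrite (a_h1 nz) (a_grad _ nz) => hdiff.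
by case: Aj; lia.
Qed.

End KnotComplex.

Lemma kappa_chain_match (u w : 'F_2) (n : nat) : (0 < n)%N ->
  (forall i, (i < n)%N -> u * (i == 0%N)%:R = w * (i == n.-1)%:R) ->
  u = w /\ (w != 0 -> n = 1%N).
Proof.
move=> n_gt0 eq_uw; have lt_n1 : (n.-1 < n)%N by rewrite ltn_predL.
have := eq_uw 0%N n_gt0; have := eq_uw n.-1 lt_n1.
case: (eqVneq n 1%N) => [-> /= _|n_neq1]; first by rewrite !mulr1.
have /negbTE n1_neq0 : n.-1 != 0%N by apply: contra n_neq1; lia.
by rewrite n1_neq0 eqxx (eq_sym 0%N) n1_neq0 !mulr0 !mulr1 => <- ->; split; rewrite ?eqxx.
Qed.

Section TypeDArrows.
Variables (m : nat) (h l : 'I_m -> nat) (P0 Q0 : 'M['F_2]_(m.*2.+1)) (t : int) (lsp : bool).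
Local Notation G := (Gen m h l t lsp).
Local Notation arrow := (arrow m h l P0 Q0 t lsp).
Local Notation DI := (DI m h l P0 Q0 t lsp).

Definition genX (p : 'I_(m.*2.+1)) : G := inl (inl (inl (inl p))).
Definition genK (j : 'I_m) (i : 'I_(h j)) : G := inl (inl (inl (inr (existT _ j i)))).
Arguments genK : clear implicits.

Lemma DI_D1_genK (v : {ffun G -> 'F_2}) j i :
  DI D1 v (genK j i) = v (genX (oddI m j)) * ((i : nat) == 0%N)%:R.
Proof.
rewrite ffunE (bigD1 (genX (oddI m j))) //= oddI_val // eqxx big1 ?addr0 // => x.
case: x => [[[[p|[j' i']]|[j' i']]|i']|i'] //= neq_p; rewrite ?mulr0 //.
suff /negbTE-> : (p : nat) != j.*2.+1 by rewrite mulr0.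
by apply: contra neq_p => /eqP eq_p; apply/eqP; congr genX; apply: val_inj; rewrite /= oddI_val.
Qed.

Lemma DI_D123_genK (a : 'rV['F_2]_(m.*2.+1)) j i :
  DI D123 (inj0 m h l t lsp a) (genK j i) = a 0 (evI m j.+1) * ((i : nat) == (h j).-1)%:R.
Proof.
rewrite ffunE (bigD1 (genX (evI m j.+1))) //= ffunE /= evI_val // eqxx big1 ?addr0 // => x.
case: x => [[[[p|[j' i']]|[j' i']]|i']|i'] //= neq_p; rewrite ffunE ?mul0r //=.
suff /negbTE-> : (p : nat) != j.*2.+2 by rewrite mulr0.
by apply: contra neq_p => /eqP eq_p; apply/eqP; congr genX; apply: val_inj; rewrite /= evI_val.
Qed.

Lemma DI_into_even_eta (I : Dlabel) (c : G -> 'F_2) (r : G -> nat) (b : {ffun G -> 'F_2}) :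
  (forall y p, arrow I y (genX p) = c y * Q0 (evI m (r y)) p) ->
  exists2 x : 'rV['F_2]_(m.*2.+1), (forall q, x 0 q != 0 -> ~~ odd q) &
    forall p, DI I b (genX p) = (x *m Q0) 0 p.
Proof.
move=> arrowE; exists (\row_q \sum_y b y * c y * (q == evI m (r y))%:R).
  move=> q; rewrite mxE; apply: contraR => /negPn odd_q; apply/eqP/big1 => y _.
  suff /negbTE-> : q != evI m (r y) by rewrite mulr0.
  by apply: contraTneq odd_q => ->; rewrite evI_even.
move=> p; rewrite ffunE mxE; under [RHS]eq_bigr do rewrite mxE big_distrl /=.
rewrite exchange_big; apply: eq_bigr => y _ /=; rewrite arrowE mulrA.
rewrite (bigD1 (evI m (r y))) //= eqxx mulr1 big1 ?addr0 // => q /negbTE->.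
by rewrite mulr0 mul0r.
Qed.

Definition D2_target (y : G) : 'F_2 * nat :=
  match view m h l t lsp y with
  | GL j i => ((i == (l j).-1 : bool)%:R, j.+1)
  | GN i => ([&& t == 0, ~~ lsp & i == 1%N]%:R, 0%N)
  | GM i => (((t < 0) && (i == `|t|.-1))%:R, 0%N)
  | _ => (0, 0%N)
  end.

Definition D12_target (y : G) : 'F_2 * nat :=
  match view m h l t lsp y with
  | GX p => ([&& t == 0, lsp & p == 0%N :> nat]%:R, 0%N)
  | _ => (0, 0%N)
  end.

Lemma arrow_D2_genX y p :
  arrow D2 y (genX p) = (D2_target y).1 * Q0 (evI m (D2_target y).2) p.
Proof. by case: y => [[[[p'|[j i]]|[j i]]|i]|i]; rewrite /= ?mul0r. Qed.

Lemma arrow_D12_genX y p :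
  arrow D12 y (genX p) = (D12_target y).1 * Q0 (evI m (D12_target y).2) p.
Proof. by case: y => [[[[p'|[j i]]|[j i]]|i]|i]; rewrite /= ?mul0r. Qed.

Lemma D1_eq_D123_kappa (a x : 'rV['F_2]_(m.*2.+1)) (v : {ffun G -> 'F_2}) :
  (forall j, (0 < h j)%N) ->
  (forall p, v (genX p) = (x *m Q0) 0 p) ->
  DI D1 v = DI D123 (inj0 m h l t lsp a) ->
  forall j : 'I_m, (x *m Q0) 0 (oddI m j) = a 0 (evI m j.+1)
                   /\ (a 0 (evI m j.+1) != 0 -> h j = 1%N).
Proof.
move=> h_gt0 vE eq_v j; apply: kappa_chain_match (h_gt0 j) _ => i lt_ih.
have := congr1 (fun f : {ffun G -> _} => f (genK j (Ordinal lt_ih))) eq_v.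
by rewrite /= DI_D1_genK DI_D123_genK vE.
Qed.

End TypeDArrows.

Theorem lemma3p5 (m : nat) (Dm : 'M[{poly 'F_2}]_(m.*2.+1))
    (Axi Aeta : 'I_(m.*2.+1) -> int) (P Q : 'M[{poly 'F_2}]_(m.*2.+1))
    (h l : 'I_m -> nat) (g : nat) (n : int) (lsp : bool) :
  knot_complex (m.*2.+1) Axi Dm ->
  genus_of (m.*2.+1) Axi g -> (0 < g)%N ->
  vert_simpl m Dm Axi h ->
  horiz_simpl m Dm Axi Q Aeta l ->
  compat (m.*2.+1) Axi Aeta P Q ->
  let t := n - Axi (evI m 0) *+ 2 in
  let P0 := eval0 (m.*2.+1) P in
  let Q0 := eval0 (m.*2.+1) Q in
  forall (k : int), - (g%:Z) <= k <= g%:Z ->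
  forall a : 'rV['F_2]_(m.*2.+1), inBp m Axi P0 k a -> a != 0 ->
  ~ (exists b : {ffun Gen m h l t lsp -> 'F_2},
        DI m h l P0 Q0 t lsp D1 (DI m h l P0 Q0 t lsp D2 b)
        = DI m h l P0 Q0 t lsp D123 (inj0 m h l t lsp a)) /\
  ~ (exists b : {ffun Gen m h l t lsp -> 'F_2},
        DI m h l P0 Q0 t lsp D1 (DI m h l P0 Q0 t lsp D12 b)
        = DI m h l P0 Q0 t lsp D123 (inj0 m h l t lsp a)).
Proof.
move=> [Dm2 _ _ _] _ _ vsimpl hsimpl compatPQ t P0 Q0 k _ a aB a_neq0.
have h_gt0 j : (0 < h j)%N by have [] := vsimpl.1 j.
have absurd := kappa_chain_absurd vsimpl hsimpl compatPQ Dm2 aB a_neq0.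
split=> -[b eq_b].
  have [x x_even xE] := DI_into_even_eta b (@arrow_D2_genX m h l P0 Q0 t lsp).
  exact: absurd x_even (D1_eq_D123_kappa h_gt0 xE eq_b).
have [x x_even xE] := DI_into_even_eta b (@arrow_D12_genX m h l P0 Q0 t lsp).
exact: absurd x_even (D1_eq_D123_kappa h_gt0 xE eq_b).
Qed.
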